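(* For each $\gamma\in\mathbb{R}$ let $\hat g_{-,\gamma}$ be any minimizer of $\hat h_{-,\gamma}$ over $\mathcal{F}$. Then: (1) $\hat h_{-,\gamma}(\hat g_{-,\gamma})$ is monotonically increasing in $\gamma$; (2) $\hat e_{\text{orig}}(\hat g_{-,\gamma})$ is monotonically decreasing in $\gamma$; (3) for fixed $\epsilon_{\text{abs}}>0$, the quantity $\frac{\hat h_{-,\gamma}(\hat g_{-,\gamma})}{\epsilon_{\text{abs}}}-\gamma$ is monotonically decreasing in $\gamma$ over the range where $\hat e_{\text{orig}}(\hat g_{-,\gamma})\le\epsilon_{\text{abs}}$, and monotonically increasing in $\gamma$ otherwise.
   Context: Setting: $\mathcal{F}$ a set of prediction models, $L\ge0$ a loss, and a fixed observed sample $(\mathbf{y}_{[i]},\mathbf{X}_{1[i]},\mathbf{X}_{2[i]})$, $i=1,\dots,n$, $n\ge2$. $\hat e_{\text{orig}}(f)=\frac1n\sum_iL\{f,(\mathbf{y}_{[i]},\mathbf{X}_{1[i]},\mathbf{X}_{2[i]})\}$; $\hat e_{\text{switch}}(f)=\frac1{n(n-1)}\sum_i\sum_{j\ne i}L\{f,(\mathbf{y}_{[j]},\mathbf{X}_{1[i]},\mathbf{X}_{2[j]})\}$. For $\gamma\in\mathbb{R}$, $\hat h_{-,\gamma}(f):=\gamma\hat e_{\text{orig}}(f)+\hat e_{\text{switch}}(f)$. Standing assumptions: $\min_{f\in\mathcal{F}}\hat e_{\text{orig}}(f)>0$ and minimizers of $\hat h_{-,\gamma}$ over $\mathcal{F}$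 exist for every $\gamma$. *)

From mathcomp Require Import all_boot all_order all_algebra.
From mathcomp Require Import reals.
Set Implicit Arguments. Unset Strict Implicit. Unset Printing Implicit Defensive.
Import Order.TTheory GRing.Theory Num.Theory.
Local Open Scope ring_scope.

Section Risks.
Variables (R : realType) (M Y T1 T2 : Type).
Variable (L : M -> Y * T1 * T2 -> R).
Variables (n : nat) (y : 'I_n -> Y) (X1 : 'I_n -> T1) (X2 : 'I_n -> T2).

Definition e_orig (f : M) : R :=
  (n%:R)^-1 * \sum_(i < n) L f (y i, X1 i, X2 i).

Definition e_switch (f : M) : R :=
  ((n * n.-1)%N%:R)^-1 *
    \sum_(i < n) \sum_(j < n | j != i) L f (y j, X1 i, X2 j).

Definition h_minus (gamma : R) (f : M) : R :=
  gamma * e_orig f + e_switch f.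

End Risks.

(* For fixed f the objective [gamma * a f + b f] (here [a = e_orig], [b = e_switch])
   is affine in gamma.  Comparing the minimizers at gamma1 <= gamma2 through each
   other's objective gives (gamma2 - gamma1) (a (g gamma2) - a (g gamma1)) <= 0,
   and the minimal value moves with the sign of the slope [a] at the relevant
   minimizer.  Part (3) is the same statement for the slope [a - eps]: subtracting
   [gamma * eps] does not change the minimizers, and
   [h / eps - gamma = (h - gamma * eps) / eps]. *)
From mathcomp Require Import all_boot all_order all_algebra.
From mathcomp Require Import reals.
From mathcomp Require Import lra.
Import Order.TTheory GRing.Theory Num.Theory.
Local Open Scope ring_scope.

Definition pencil {R : pzRingType} {M : Type} (a b : M -> R) (gamma : R) (f : M) : R :=
  gamma * a f + b f.

Section PencilMinimizers.
Context {R : realDomainType} {M : Type} {F : M -> Prop} {a b : M -> R} {g : R -> M}.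
Hypothesis gF : forall gamma, F (g gamma).
Hypothesis g_min : forall gamma f, F f -> pencil a b gamma (g gamma) <= pencil a b gamma f.

Lemma argmin_pencil_nonincreasing g1 g2 : g1 <= g2 -> a (g g2) <= a (g g1).
Proof.
rewrite le_eqVlt => /predU1P [-> //| lt12].
have := g_min g1 _ (gF g2); have := g_min g2 _ (gF g1); rewrite /pencil => min2 min1.
have : (g2 - g1) * (a (g g2) - a (g g1)) <= 0 by nra.
by rewrite pmulr_rle0 ?subr_gt0 // subr_le0.
Qed.

Lemma min_pencil_nondecreasing g1 g2 :
  g1 <= g2 -> 0 <= a (g g2) -> pencil a b g1 (g g1) <= pencil a b g2 (g g2).
Proof.
move=> le12 a2_ge0; apply: (le_trans (g_min g1 _ (gF g2))).
by rewrite /pencil lerD2r ler_wpM2r.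
Qed.

Lemma min_pencil_nonincreasing g1 g2 :
  g1 <= g2 -> a (g g1) <= 0 -> pencil a b g2 (g g2) <= pencil a b g1 (g g1).
Proof.
move=> le12 a1_le0; apply: (le_trans (g_min g2 _ (gF g1))).
by rewrite /pencil lerD2r ler_wnM2r.
Qed.

End PencilMinimizers.

Section ThresholdedPencil.
Context {R : realFieldType} {M : Type} {F : M -> Prop} {a b : M -> R} {g : R -> M}.
Hypothesis gF : forall gamma, F (g gamma).
Hypothesis g_min : forall gamma f, F f -> pencil a b gamma (g gamma) <= pencil a b gamma f.
Context {eps : R}.
Hypothesis eps_gt0 : 0 < eps.

Let a_eps (f : M) : R := a f - eps.

Lemma pencil_shift gamma f : pencil a_eps b gamma f = pencil a b gamma f - gamma * eps.
Proof. by rewrite /pencil /a_eps mulrBr addrAC. Qed.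

Lemma pencil_shift_div gamma f :
  pencil a b gamma f / eps - gamma = pencil a_eps b gamma f / eps.
Proof. by rewrite pencil_shift mulrBl mulfK ?gt_eqF. Qed.

Let g_min_shift gamma f : F f -> pencil a_eps b gamma (g gamma) <= pencil a_eps b gamma f.
Proof. by move=> Ff; rewrite !pencil_shift lerD2r g_min. Qed.

Lemma min_pencil_div_sub_nonincreasing g1 g2 : g1 <= g2 -> a (g g1) <= eps ->
  pencil a b g2 (g g2) / eps - g2 <= pencil a b g1 (g g1) / eps - g1.
Proof.
move=> le12 a1_le; rewrite !pencil_shift_div ler_pM2r ?invr_gt0 //.
by apply: (min_pencil_nonincreasing gF g_min_shift _ _ le12); rewrite /a_eps subr_le0.
Qed.

Lemma min_pencil_div_sub_nondecreasing g1 g2 : g1 <= g2 -> eps <= a (g g2) ->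
  pencil a b g1 (g g1) / eps - g1 <= pencil a b g2 (g g2) / eps - g2.
Proof.
move=> le12 a2_ge; rewrite !pencil_shift_div ler_pM2r ?invr_gt0 //.
by apply: (min_pencil_nondecreasing gF g_min_shift _ _ le12); rewrite /a_eps subr_ge0.
Qed.

End ThresholdedPencil.

Lemma e_orig_ge0 {R : realType} {M Y T1 T2 : Type} {L : M -> Y * T1 * T2 -> R}
    {n : nat} (y : 'I_n -> Y) (X1 : 'I_n -> T1) (X2 : 'I_n -> T2) :
  (forall f z, 0 <= L f z) -> forall f, 0 <= e_orig L y X1 X2 f.
Proof.
move=> L_ge0 f; apply: mulr_ge0; first by rewrite invr_ge0 ler0n.
by apply: sumr_ge0 => i _; apply: L_ge0.
Qed.

Theorem lemma15 (R : realType) (M Y T1 T2 : Type) (F : M -> Prop)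
  (L : M -> Y * T1 * T2 -> R) (n : nat)
  (y : 'I_n -> Y) (X1 : 'I_n -> T1) (X2 : 'I_n -> T2)
  (hn : (2 <= n)%N)
  (hL : forall f z, 0 <= L f z)
  (hmin : exists f0, F f0 /\ (forall f, F f -> e_orig L y X1 X2 f0 <= e_orig L y X1 X2 f)
                      /\ 0 < e_orig L y X1 X2 f0)
  (g : R -> M)
  (hgF : forall gamma, F (g gamma))
  (hg : forall gamma f, F f ->
          h_minus L y X1 X2 gamma (g gamma) <= h_minus L y X1 X2 gamma f) :
  (* (1) *)
  (forall g1 g2, g1 <= g2 ->
     h_minus L y X1 X2 g1 (g g1) <= h_minus L y X1 X2 g2 (g g2)) /\
  (* (2) *)
  (forall g1 g2, g1 <= g2 ->
     e_orig L y X1 X2 (g g2) <= e_orig L y X1 X2 (g g1)) /\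
  (* (3) *)
  (forall eps : R, 0 < eps ->
     (forall g1 g2, g1 <= g2 ->
        e_orig L y X1 X2 (g g1) <= eps -> e_orig L y X1 X2 (g g2) <= eps ->
        h_minus L y X1 X2 g2 (g g2) / eps - g2
          <= h_minus L y X1 X2 g1 (g g1) / eps - g1) /\
     (forall g1 g2, g1 <= g2 ->
        eps < e_orig L y X1 X2 (g g1) -> eps < e_orig L y X1 X2 (g g2) ->
        h_minus L y X1 X2 g1 (g g1) / eps - g1
          <= h_minus L y X1 X2 g2 (g g2) / eps - g2)).
Proof.
have e_ge0 := e_orig_ge0 y X1 X2 hL.
split; last split.
- by move=> g1 g2 le12; exact: (min_pencil_nondecreasing hgF hg _ _ le12 (e_ge0 _)).
- exact: (argmin_pencil_nonincreasing hgF hg).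
- move=> eps eps_gt0; split=> g1 g2 le12 e1_eps e2_eps.
  + exact: (min_pencil_div_sub_nonincreasing hgF hg eps_gt0 _ _ le12 e1_eps).
  + exact: (min_pencil_div_sub_nondecreasing hgF hg eps_gt0 _ _ le12 (ltW e2_eps)).
Qed.
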